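(* Let $d\ge1$, $n\ge2$, and let $G$ be the $d$-dimensional grid graph with all side lengths equal to $n$ (vertex set $\{[x_1,\dots,x_d]\in\mathbb{Z}^d:1\le x_j\le n\}$, vertices adjacent iff they differ in exactly one coordinate by exactly $1$), with normalized Laplacian $\mathfrak{L}=D^{-1/2}(D-S)D^{-1/2}$. For each integer $z$ with $0\le z\le n-1$, the number $$\lambda_{[z]}=2\left(\cos\left(\frac{\pi z}{2(n-1)}\right)\right)^2$$ is an eigenvalue of $\mathfrak{L}$, with corresponding eigenvector $\mathbf{v}_{[z]}$ having components $$(\mathbf{v}_{[z]})_{[x_1,\dots,x_d]}=\sqrt{\deg([x_1,\dots,x_d])}\prod_{j=1}^d(-1)^{x_j}\cos\left(\frac{\pi z}{n-1}(x_j-1)\right),$$ where $\deg([x_1,\dots,x_d])=d+\#\{j: x_j\ne1\text{ and }x_j\ne n\}$ is the degree of the vertex.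
   Context: $S$ is the adjacency matrix and $D$ the diagonal degree matrix of the grid graph. *)

From HB Require Import structures.
From mathcomp Require Import all_boot all_order all_algebra.
From mathcomp Require Import all_classical all_reals all_analysis.
Set Implicit Arguments. Unset Strict Implicit. Unset Printing Implicit Defensive.
Import Order.TTheory GRing.Theory Num.Theory.
Local Open Scope ring_scope.

(* Vertices of the d-dimensional grid with side n: x : 'I_d -> 'I_n,
   where the coordinate value i : 'I_n stands for the paper's x_j = i + 1. *)
Definition gridV (d n : nat) := {ffun 'I_d -> 'I_n}.

Definition grid_adj (d n : nat) (x y : gridV d n) : bool :=
  [exists j : 'I_d,
     (((x j).+1 == y j) || ((y j).+1 == x j))%N &&
     [forall k : 'I_d, (k != j) ==> (x k == y k)]].

Definition grid_deg (d n : nat) (x : gridV d n) : nat :=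
  #|[set y : gridV d n | grid_adj x y]|.

Definition grid_S (R : realType) (d n : nat) (x y : gridV d n) : R :=
  (grid_adj x y)%:R.
Definition grid_D (R : realType) (d n : nat) (x y : gridV d n) : R :=
  if x == y then (grid_deg x)%:R else 0.

(* normalized Laplacian D^{-1/2} (D - S) D^{-1/2}; since D is diagonal,
   the (x,y) entry of the product is deg(x)^{-1/2} (D - S)_{xy} deg(y)^{-1/2} *)
Definition grid_normLap (R : realType) (d n : nat) (x y : gridV d n) : R :=
  (Num.sqrt (grid_deg x)%:R)^-1 * (grid_D R x y - grid_S R x y)
  * (Num.sqrt (grid_deg y)%:R)^-1.

(* Write f for v divided by sqrt(deg), so that v is an eigenvector of
   D^{-1/2}(D - S)D^{-1/2} with eigenvalue 1 - c exactly when S f = c D f.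
   On the path 1..n the function g(x) = (-1)^x cos(theta (x - 1)), with
   theta = pi z/(n - 1), satisfies S g = -cos(theta) D g: in the interior by
   the sum-to-product formula for cosines, and at both ends because
   theta (n - 1) is a multiple of pi.  Since both the neighbourhood and the
   degree of a grid vertex split coordinatewise, the product of copies of g
   satisfies S f = -cos(theta) D f on the grid, and
   1 + cos(theta) = 2 cos(theta/2)^2. *)

From HB Require Import structures.
From mathcomp Require Import all_boot all_order all_algebra.
From mathcomp Require Import all_classical all_reals all_analysis.
From mathcomp Require Import ring zify.
Import Order.TTheory GRing.Theory Num.Theory.
Local Open Scope ring_scope.

Definition path_adj (a i : nat) : bool := (a.+1 == i) || (i.+1 == a).

Section PathEigenvector.
Context {R : realType}.

(* [g] satisfies (S g)(a) = c deg(a) g(a) on the path 0, ..., n-1; summing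
   [g i - c * g a] over the neighbours [i] of [a] avoids the degree. *)
Definition path_eigen (n : nat) (c : R) (g : nat -> R) : Prop :=
  forall a : 'I_n, \sum_(i < n | path_adj a i) (g i - c * g a) = 0.

Lemma sum_path_adj n (F : nat -> R) a : (a < n)%N ->
  \sum_(i < n | path_adj a i) F i =
  (if (a.+1 < n)%N then F a.+1 else 0) + (if a is b.+1 then F b else 0).
Proof.
move=> lt_an; rewrite (bigID (fun i : 'I_n => i == a.+1 :> nat)) /=.
congr (_ + _).
  rewrite (eq_bigl (fun i : 'I_n => i == a.+1 :> nat)) ?big_ord1_eq // => i.
  by apply/idP/idP; rewrite /path_adj; lia.
case: a lt_an => [|b] lt_bn.
  by rewrite big_pred0 // => i; apply/negP; rewrite /path_adj; lia.
rewrite (eq_bigl (fun i : 'I_n => i == b :> nat)) ?big_ord1_eq ?(ltnW lt_bn) //.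
by move=> i; apply/idP/idP; rewrite /path_adj; lia.
Qed.

Definition signed_cos (th : R) (i : nat) : R := (-1) ^+ i.+1 * cos (th * i%:R).

Lemma signed_cos_first th : signed_cos th 1 = - cos th * signed_cos th 0.
Proof. by rewrite /signed_cos mulr1 mulr0 cos0 !exprS expr0; ring. Qed.

Lemma signed_cos_recurrence th i :
  signed_cos th i + signed_cos th i.+2 = 2 * - cos th * signed_cos th i.+1.
Proof.
rewrite /signed_cos.
have -> : th * i.+2%:R = th * i.+1%:R + th by rewrite -[i.+2%:R]natr1; ring.
have -> : th * i%:R = th * i.+1%:R - th by rewrite -[i.+1%:R]natr1; ring.
rewrite cosB cosD !exprS; ring.
Qed.

Lemma signed_cos_last th b z : th * b.+1%:R = pi *+ z ->
  signed_cos th b = - cos th * signed_cos th b.+1.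
Proof.
move=> th_end; rewrite /signed_cos th_end.
have -> : th * b%:R = - th + pi *+ z by rewrite -th_end -addn1 natrD; ring.
rewrite (alternatingn (@cosDpi R)) -[pi *+ z]add0r (alternatingn (@cosDpi R)).
rewrite cosN cos0 !exprS; ring.
Qed.

Lemma path_eigen_signed_cos n th z : (1 < n)%N -> th * (n - 1)%:R = pi *+ z ->
  path_eigen n (- cos th) (signed_cos th).
Proof.
move=> lt1n th_end [a lt_an] /=.
rewrite (sum_path_adj _ (fun i => signed_cos th i - - cos th * signed_cos th a)) //.
case: a lt_an => [|b] lt_an.
  by rewrite lt1n addr0 signed_cos_first subrr.
case: ltnP => [_ | le_nb2].
  by rewrite addrACA [_ + signed_cos th b]addrC signed_cos_recurrence; ring.
have /signed_cos_last -> : th * b.+1%:R = pi *+ z.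
  by rewrite -th_end; congr (_ * _%:R); apply/eqP; rewrite eqn_leq; lia.
by rewrite add0r subrr.
Qed.

End PathEigenvector.

Section GridEigenvector.
Context {R : realType} {d n : nat}.
Implicit Types (x y : gridV d n) (j k : 'I_d).

Definition grid_eigen (c : R) (f : gridV d n -> R) : Prop :=
  forall x, \sum_(y | grid_adj x y) (f y - c * f x) = 0.

Definition grid_adj_at x y j : bool :=
  path_adj (x j) (y j) && [forall k, (k != j) ==> (x k == y k)].

Definition set_coord x j (i : 'I_n) : gridV d n :=
  [ffun k => if k == j then i else x k].

Lemma grid_adj_at_uniq x y j k : grid_adj_at x y j -> grid_adj_at x y k -> j = k.
Proof.
move=> /andP[_ /forallP same_off_j] /andP[adj_k _].
apply/eqP/negPn/negP => ne_jk.
have := same_off_j k; rewrite eq_sym ne_jk => /eqP same_k.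
by move: adj_k; rewrite /path_adj same_k; case/orP => /eqP; lia.
Qed.

Lemma sum_grid_adj x (F : gridV d n -> R) :
  \sum_(y | grid_adj x y) F y = \sum_j \sum_(y | grid_adj_at x y j) F y.
Proof.
rewrite (exchange_big_dep xpredT) //= [LHS]big_mkcond.
apply: eq_bigr => y _; case: (boolP (grid_adj x y)) => [/existsP[j adj_j] | nadj].
  rewrite (big_pred1 j) // => k.
  by apply/idP/eqP => [adj_k | ->]; first exact: grid_adj_at_uniq adj_k adj_j.
rewrite big_pred0 // => k; apply/negP => adj_k.
by move/negP: nadj; apply; apply/existsP; exists k.
Qed.

Lemma sum_grid_adj_at x j (H : nat -> R) :
  \sum_(y | grid_adj_at x y j) H (y j) = \sum_(i < n | path_adj (x j) i) H i.
Proof.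
rewrite (reindex_onto (set_coord x j) (fun y => y j)) /=; last first.
  move=> y /andP[_ /forallP same]; apply/ffunP => k; rewrite ffunE.
  by case: eqVneq => [-> // | ne_kj]; have := same k; rewrite ne_kj => /eqP.
apply: eq_big => [i | i _]; last by rewrite ffunE eqxx.
have same_off_j : [forall k, (k != j) ==> (x k == set_coord x j i k)].
  by apply/forallP => k; rewrite ffunE; case: ifP => // _; rewrite eqxx.
by rewrite /grid_adj_at same_off_j ffunE !eqxx !andbT.
Qed.

Lemma prod_grid_adj_at x y j (f : nat -> R) : grid_adj_at x y j ->
  \prod_k f (y k) = f (y j) * \prod_(k | k != j) f (x k).
Proof.
move=> /andP[_ /forallP same]; rewrite (bigD1 j) //=; congr (_ * _).
by apply: eq_bigr => k ne_kj; have := same k; rewrite ne_kj => /eqP ->.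
Qed.

Lemma grid_eigen_prod {c} {g : nat -> R} :
  path_eigen n c g -> grid_eigen c (fun x => \prod_j g (x j)).
Proof.
move=> g_eigen x; rewrite sum_grid_adj; apply: big1 => j _.
rewrite (eq_bigr (fun y => (g (y j) - c * g (x j)) * \prod_(k | k != j) g (x k))).
  rewrite -big_distrl /= (sum_grid_adj_at _ _ (fun i => g i - c * g (x j))).
  by rewrite g_eigen mul0r.
move=> y adj_j; rewrite (prod_grid_adj_at _ _ _ g adj_j).
by rewrite [X in c * X](bigD1 j) //=; ring.
Qed.

Lemma grid_deg_gt0 x : (0 < d)%N -> (1 < n)%N -> (0 < grid_deg x)%N.
Proof.
move=> d_gt0 lt1n; pose j := Ordinal d_gt0.
have [i adj_i] : exists i : 'I_n, path_adj (x j) i.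
  case: (x j) => [[|m] lt_m]; first by exists (Ordinal lt1n).
  by exists (Ordinal (ltnW lt_m)); rewrite /path_adj eqxx orbT.
apply/card_gt0P; exists (set_coord x j i); rewrite inE; apply/existsP; exists j.
rewrite ffunE eqxx; apply/andP; split; first exact: adj_i.
by apply/forallP => k; rewrite ffunE; case: ifP => // _; rewrite eqxx.
Qed.

Lemma sum_grid_D_mul x (u : gridV d n -> R) :
  \sum_y grid_D R x y * u y = (grid_deg x)%:R * u x.
Proof.
rewrite (bigD1 x) //= big1 ?addr0 /grid_D ?eqxx // => y ne_yx.
by rewrite eq_sym (negbTE ne_yx) mul0r.
Qed.

Lemma sum_grid_S_mul x (u : gridV d n -> R) :
  \sum_y grid_S R x y * u y = \sum_(y | grid_adj x y) u y.
Proof.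
rewrite [RHS]big_mkcond; apply: eq_bigr => y _.
by rewrite /grid_S; case: grid_adj; rewrite ?mul1r ?mul0r.
Qed.

Lemma sum_grid_adj_const x (c : R) : \sum_(y | grid_adj x y) c = c *+ grid_deg x.
Proof. by rewrite /grid_deg -sumr_const; apply: eq_bigl => y; rewrite inE. Qed.

Lemma grid_normLap_eigen {c f} : (0 < d)%N -> (1 < n)%N -> grid_eigen c f ->
  forall x, \sum_y grid_normLap R x y * (Num.sqrt (grid_deg y)%:R * f y) =
            (1 - c) * (Num.sqrt (grid_deg x)%:R * f x).
Proof.
move=> d_gt0 lt1n f_eigen x.
pose s y : R := Num.sqrt (grid_deg y)%:R.
have s_neq0 y : s y != 0 by rewrite sqrtr_eq0 -ltNge ltr0n grid_deg_gt0.
have -> : \sum_y grid_normLap R x y * (s y * f y) =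
          (s x)^-1 * \sum_y (grid_D R x y - grid_S R x y) * f y.
  rewrite big_distrr; apply: eq_bigr => y _.
  by rewrite /grid_normLap -!mulrA mulKf ?s_neq0.
have sum_adj_f : \sum_(y | grid_adj x y) f y = (grid_deg x)%:R * (c * f x).
  by apply/eqP; rewrite mulr_natl -subr_eq0 -sum_grid_adj_const -sumrB f_eigen.
have deg_sq : (grid_deg x)%:R = s x ^+ 2 by rewrite sqr_sqrtr ?ler0n.
under eq_bigr do rewrite mulrBl.
rewrite sumrB sum_grid_D_mul sum_grid_S_mul sum_adj_f -/(s x) deg_sq.
by field.
Qed.

End GridEigenvector.

Theorem mainTheorem9 (R : realType) (d n : nat) (hd : (1 <= d)%N) (hn : (2 <= n)%N)
  (z : nat) (hz : (z <= n - 1)%N) :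
  let lam : R := 2 * (cos (pi * z%:R / (2 * (n - 1)%:R))) ^+ 2 in
  let v : gridV d n -> R := fun x =>
    Num.sqrt (grid_deg x)%:R *
    \prod_(j < d) ((-1) ^+ (x j).+1 * cos (pi * z%:R / (n - 1)%:R * (x j)%:R)) in
  (exists x : gridV d n, v x != 0) /\
  (forall x : gridV d n, \sum_(y : gridV d n) grid_normLap R x y * v y = lam * v x).
Proof.
move=> lam v; set th : R := pi * z%:R / (n - 1)%:R.
have n1_neq0 : (n - 1)%:R != 0 :> R by rewrite pnatr_eq0 subn_eq0 -ltnNge.
have th_end : th * (n - 1)%:R = pi *+ z by rewrite mulfVK // mulr_natr.
have lam_eq : lam = 1 - - cos th.
  have -> : th = (pi * z%:R / (2 * (n - 1)%:R)) *+ 2 by rewrite /th mulr2n; field.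
  by rewrite /lam cos_mulr2n opprK mulr_natl; ring.
split.
  exists [ffun _ => Ordinal (ltnW hn)]; rewrite mulf_neq0 //.
    by rewrite sqrtr_eq0 -ltNge ltr0n grid_deg_gt0.
  under eq_bigr do rewrite ffunE /= mulr0 cos0 mulr1 expr1.
  by rewrite prodr_const expf_neq0 // oppr_eq0 oner_eq0.
have g_eigen : path_eigen n (- cos th) (signed_cos th).
  exact: path_eigen_signed_cos hn th_end.
move=> x; rewrite lam_eq.
exact: grid_normLap_eigen hd hn (grid_eigen_prod g_eigen) x.
Qed.
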